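(* Let $a,b,c$ be positive real numbers and $n\geq1$ an integer. For $i=1,\dots,n$ define \[ f_i(x_1,\ldots,x_n)=\frac{a}{1-x_i}-\frac{b}{x_i}-\sum_{j\neq i}\frac{c}{x_i-x_j}, \] and let $U=\{(x_1,\ldots,x_n)\in\mathbb{R}^n:0<x_1<x_2<\cdots<x_n<1\}$. Let $v$ be a point of the boundary $\partial U$. Then for every sequence $(u_k)$ of points of $U$ converging to $v$, there exists $i\in\{1,\dots,n\}$ such that $\lim_{k\to\infty}|f_i(u_k)|=\infty$.
   Context: When $n=1$ the sum over $j\neq i$ is empty (zero). *)

(* Points of R^n are row vectors 'rV[R]_n with the
   canonical (product / max-norm) topology. *)
From HB Require Import structures.
From mathcomp Require Import all_boot all_order all_algebra.
From mathcomp Require Import all_classical all_reals all_analysis.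
Set Implicit Arguments. Unset Strict Implicit. Unset Printing Implicit Defensive.
Import Order.TTheory GRing.Theory Num.Theory.
Import numFieldNormedType.Exports.
Local Open Scope ring_scope.
Local Open Scope classical_set_scope.

Definition boundary (T : topologicalType) (A : set T) : set T :=
  closure A `\` interior A.

Definition fcomp (R : realType) (n : nat) (a b c : R) (i : 'I_n)
  (x : 'rV[R]_n) : R :=
  a / (1 - x ord0 i) - b / x ord0 i
  - \sum_(j < n | j != i) c / (x ord0 i - x ord0 j).

Definition Uset (R : realType) (n : nat) : set 'rV[R]_n :=
  [set x | (forall i : 'I_n, 0 < x ord0 i < 1) /\
           (forall i j : 'I_n, (i < j)%N -> x ord0 i < x ord0 j)].

From HB Require Import structures.
From mathcomp Require Import all_boot all_order all_algebra.
From mathcomp Require Import all_classical all_reals all_analysis.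
From mathcomp Require Import ring.
Import Order.TTheory GRing.Theory Num.Theory.
Import numFieldNormedType.Exports.
Local Open Scope ring_scope.
Local Open Scope classical_set_scope.

(* Write x for u_k.  The limit v lies in the closure of the open set U but
   not in U.  If some v_i <= 0, let m be the largest such index: then
   x_m -> 0 from above, so b / x_m -> +oo, while every other term of -f_m is
   bounded below (the terms c / (x_m - x_j) with j < m are positive, and for
   j > m the gap x_m - x_j tends to v_m - v_j < 0).  Hence f_m -> -oo.
   Otherwise all v_i > 0, and failure of the strict chain yields a least
   index p with v_p >= 1 or v_q <= v_p for some q > p.  Then a / (1 - x_p),
   resp. c / (x_q - x_p), tends to +oo; the terms with j < p converge because
   v_j < v_p by minimality, and all terms with j > p are positive.  Hence
   f_p -> +oo. *)

Definition lbounded_near {R : numDomainType} {T : Type} (f : T -> R)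
  (F : set_system T) := exists M : R, \forall t \near F, M <= f t.

Section lbounded_near.
Context {R : realFieldType} {T : Type} {F : set_system T} {FF : Filter F}.
Implicit Types f g y : T -> R.

Lemma cvg_lbounded_near f (l : R) : f @ F --> l -> lbounded_near f F.
Proof. by move=> fl; exists (l - 1); apply: cvgr_ge fl _ _; rewrite gtrBl. Qed.

Lemma ge0_lbounded_near f : (\forall t \near F, 0 <= f t) -> lbounded_near f F.
Proof. by exists 0. Qed.

Lemma lbounded_nearD f g :
  lbounded_near f F -> lbounded_near g F -> lbounded_near (fun t => f t + g t) F.
Proof.
move=> [M fM] [N gN]; exists (M + N).
by apply: filterS2 fM gN => t; apply: lerD.
Qed.

Lemma lbounded_near_sum (I : Type) (r : seq I) (P : pred I) (g : I -> T -> R) :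
  (forall j, P j -> lbounded_near (g j) F) ->
  lbounded_near (fun t => \sum_(j <- r | P j) g j t) F.
Proof.
move=> gP; elim: r => [|j r [M rM]].
  by exists 0; apply: nearW => t; rewrite big_nil.
case: (boolP (P j)) => Pj; last first.
  by exists M; apply: filterS rM => t; rewrite big_cons (negbTE Pj).
have [N jN] := gP j Pj; exists (N + M).
by apply: filterS2 jN rM => t jt rt; rewrite big_cons Pj lerD.
Qed.

Lemma lbounded_near_divr {c l : R} {y} : l != 0 -> y @ F --> l ->
  lbounded_near (fun t => c / y t) F.
Proof.
move=> l0 yl; apply: (@cvg_lbounded_near _ (c / l)).
exact: (cvgM (cvg_cst c) (cvgV l0 yl)).
Qed.

Lemma cvgy_lbounded_nearD f g :
  f @ F --> +oo -> lbounded_near g F -> (fun t => f t + g t) @ F --> +oo.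
Proof.
move=> /cvgryPge fy [M gM]; apply/cvgryPge => A.
by apply: filterS2 (fy (A - M)) gM => t ft gt /=; rewrite -[A](subrK M) lerD.
Qed.

Lemma lbounded_near_cvgyD f g :
  lbounded_near f F -> g @ F --> +oo -> (fun t => f t + g t) @ F --> +oo.
Proof.
by move=> fM gy; under eq_fun do rewrite addrC; apply: cvgy_lbounded_nearD.
Qed.

Lemma cvgy_sum {I : finType} {P : pred I} {g : I -> T -> R} (q : I) : P q ->
  g q @ F --> +oo -> (forall j, P j -> j != q -> lbounded_near (g j) F) ->
  (fun t => \sum_(j | P j) g j t) @ F --> +oo.
Proof.
move=> Pq gqy gP; under eq_fun do rewrite (bigD1 q) //=.
apply: cvgy_lbounded_nearD gqy _.
by apply: lbounded_near_sum => j /andP[]; apply: gP.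
Qed.

Lemma cvgy_divr {c l : R} {y} : 0 < c -> (\forall t \near F, 0 < y t) ->
  y @ F --> l -> l <= 0 -> (fun t => c / y t) @ F --> +oo.
Proof.
move=> c0 y0 yl l0; apply/cvgryPge => A.
pose B := Num.max A 1.
have B0 : 0 < B by rewrite lt_max ltr01 orbT.
have AB : A <= B by rewrite le_max lexx.
have ylt : \forall t \near F, y t < c / B.
  by apply: cvgr_lt yl _ _; apply: le_lt_trans l0 _; apply: divr_gt0.
apply: filterS2 y0 ylt => t yt0 ytlt; apply: le_trans AB _.
by rewrite ler_pdivlMr // mulrC -ler_pdivlMr // ltW.
Qed.

Lemma cvgy_normr f : f @ F --> +oo -> `|f t| @[t --> F] --> +oo.
Proof. by apply: ger_cvgy; apply: nearW => t; apply: ler_norm. Qed.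

Lemma cvgNy_normr f : f @ F --> -oo -> `|f t| @[t --> F] --> +oo.
Proof.
move=> /cvgNry; apply: ger_cvgy; apply: nearW => t.
by rewrite -normrN; apply: ler_norm.
Qed.

End lbounded_near.

Lemma boundary_open_notin {T : topologicalType} {A : set T} {x : T} :
  open A -> boundary A x -> ~ A x.
Proof. by move=> /interior_id oA [_]; rewrite oA. Qed.

Lemma Uset_open (R : realType) (n : nat) : open (@Uset R n).
Proof.
rewrite openE => x [x01 xlt]; rewrite /interior /=.
have xi i : (fun y : 'rV[R]_n => y ord0 i) @ x --> x ord0 i.
  exact: coord_continuous.
have near01 : \forall y \near x, forall i, 0 < (y : 'rV[R]_n) ord0 i < 1.
  apply: (@filter_forall _ _ _ (nbhs x) _) => i.
  have /andP[xi0 xi1] := x01 i.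
  by apply: filterS2 (cvgr_gt _ (xi i) _ xi0) (cvgr_lt _ (xi i) _ xi1) => y -> ->.
have nearlt : \forall y \near x,
    forall i j : 'I_n, (i < j)%N -> (y : 'rV[R]_n) ord0 i < y ord0 j.
  apply: (@filter_forall _ _ _ (nbhs x) _) => i.
  apply: (@filter_forall _ _ _ (nbhs x) _) => j.
  case: ltnP => ij; last exact: nearW.
  have xij : 0 < x ord0 j - x ord0 i by rewrite subr_gt0 xlt.
  by apply: filterS (cvgr_gt _ (cvgB (xi j) (xi i)) _ xij) => y; rewrite subr_gt0.
by apply: filterS2 near01 nearlt => y; split.
Qed.

Lemma fcompE (R : realType) (n : nat) (a b c : R) (i : 'I_n) (y : 'rV[R]_n) :
  fcomp a b c i y =
  a / (1 - y ord0 i) + (- b) / y ord0 i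
  + \sum_(j | j != i) c / (y ord0 j - y ord0 i).
Proof.
rewrite /fcomp mulNr -sumrN; congr (_ + _).
by apply: eq_bigr => j _; rewrite -mulrN -invrN opprB.
Qed.

Lemma fcompNE (R : realType) (n : nat) (a b c : R) (i : 'I_n) (y : 'rV[R]_n) :
  - fcomp a b c i y =
  b / y ord0 i
  + (\sum_(j | j != i) c / (y ord0 i - y ord0 j) + (- a) / (1 - y ord0 i)).
Proof. by rewrite /fcomp mulNr; ring. Qed.

Section fcomp_limits.
Context {R : realType} {n : nat} {T : Type} {F : set_system T} {FF : Filter F}.
Context {a b c : R} {x : T -> 'rV[R]_n} {v : 'rV[R]_n}.
Hypotheses (a0 : 0 < a) (b0 : 0 < b) (c0 : 0 < c).
Hypotheses (xU : forall t, Uset (x t)) (xv : x @ F --> v).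

Let x_cvg j : (fun t => x t ord0 j) @ F --> v ord0 j.
Proof. exact: (continuous_cvg _ (@coord_continuous R 1 n ord0 j v) xv). Qed.

Let onesub_x_cvg j : (fun t => 1 - x t ord0 j) @ F --> 1 - v ord0 j.
Proof. exact: cvgB (cvg_cst (1 : R)) (x_cvg j). Qed.

Let xB_cvg i j :
  (fun t => x t ord0 i - x t ord0 j) @ F --> v ord0 i - v ord0 j.
Proof. exact: cvgB (x_cvg i) (x_cvg j). Qed.

Let x_gt0 i : \forall t \near F, 0 < x t ord0 i.
Proof. by apply: nearW => t; have [/(_ i)/andP[]] := xU t. Qed.

Let x_lt1 i : \forall t \near F, 0 < 1 - x t ord0 i.
Proof. by apply: nearW => t; have [/(_ i)/andP[_]] := xU t; rewrite subr_gt0. Qed.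

Let x_incr {i j : 'I_n} : (i < j)%N ->
  \forall t \near F, 0 < x t ord0 j - x t ord0 i.
Proof.
by move=> ij; apply: nearW => t; have [_ /(_ i j ij)] := xU t; rewrite subr_gt0.
Qed.

Let gap_lbounded {i j : 'I_n} : (i < j)%N ->
  lbounded_near (fun t => c / (x t ord0 j - x t ord0 i)) F.
Proof.
move=> ij; apply: ge0_lbounded_near; near=> t.
apply: divr_ge0; first exact: ltW.
by apply: ltW; near: t; apply: x_incr.
Unshelve. all: by end_near. Qed.

Let gap_cvgy {i j : 'I_n} : (i < j)%N -> v ord0 j <= v ord0 i ->
  (fun t => c / (x t ord0 j - x t ord0 i)) @ F --> +oo.
Proof.
move=> ij vji; apply: cvgy_divr c0 (x_incr ij) (xB_cvg j i) _.
by rewrite subr_le0.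
Qed.

Lemma fcomp_cvgNy {m : 'I_n} : v ord0 m <= 0 ->
  (forall j : 'I_n, (m < j)%N -> 0 < v ord0 j) ->
  (fun t => fcomp a b c m (x t)) @ F --> -oo.
Proof.
move=> vm0 vpos; apply/cvgNry.
suff: (fun t => - fcomp a b c m (x t)) @ F --> +oo by [].
under eq_fun do rewrite fcompNE.
apply: cvgy_lbounded_nearD; first exact: cvgy_divr b0 (x_gt0 m) (x_cvg m) vm0.
apply: lbounded_nearD.
  apply: lbounded_near_sum => j; rewrite neq_ltn => /orP[jm | mj].
    exact: gap_lbounded.
  apply: lbounded_near_divr (xB_cvg m j).
  by rewrite subr_eq0 lt_eqF // (le_lt_trans vm0) // vpos.
apply: lbounded_near_divr (onesub_x_cvg m).
by rewrite subr_eq0 gt_eqF // (le_lt_trans vm0) // ltr01.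
Qed.

Lemma fcomp_cvgy {p : 'I_n} : 0 < v ord0 p ->
  (forall j : 'I_n, (j < p)%N -> v ord0 j < v ord0 p) ->
  1 <= v ord0 p \/ (exists2 q : 'I_n, (p < q)%N & v ord0 q <= v ord0 p) ->
  (fun t => fcomp a b c p (x t)) @ F --> +oo.
Proof.
move=> vp0 vlt vp.
have lb_b : lbounded_near (fun t => (- b) / x t ord0 p) F.
  exact: lbounded_near_divr (lt0r_neq0 vp0) (x_cvg p).
have lb_gap j :
    j != p -> lbounded_near (fun t => c / (x t ord0 j - x t ord0 p)) F.
  rewrite neq_ltn => /orP[jp | pj]; last exact: gap_lbounded.
  apply: lbounded_near_divr (xB_cvg j p).
  by rewrite subr_eq0 lt_eqF // vlt.
under eq_fun do rewrite fcompE.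
case: vp => [vp1 | [q pq vqp]].
  apply: cvgy_lbounded_nearD; last exact: lbounded_near_sum.
  apply: cvgy_lbounded_nearD lb_b.
  apply: cvgy_divr a0 (x_lt1 p) (onesub_x_cvg p) _.
  by rewrite subr_le0.
apply: lbounded_near_cvgyD.
  apply: lbounded_nearD lb_b; apply: ge0_lbounded_near; near=> t.
  apply: divr_ge0; first exact: ltW.
  by apply: ltW; near: t; apply: x_lt1.
apply: (cvgy_sum q).
- by rewrite gt_eqF.
- exact: gap_cvgy pq vqp.
- by move=> j jp _; apply: lb_gap.
Unshelve. all: by end_near. Qed.

End fcomp_limits.

Theorem lemma6p1 (R : realType) (n : nat) (a b c : R)
  (ha : 0 < a) (hb : 0 < b) (hc : 0 < c) (hn : (0 < n)%N)
  (v : 'rV[R]_n) (hv : boundary (@Uset R n) v)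
  (u : nat -> 'rV[R]_n) (hu : forall k, @Uset R n (u k))
  (huv : u @ \oo --> v) :
  exists i : 'I_n, (fun k => `|fcomp a b c i (u k)|) @ \oo --> +oo.
Proof.
have vU : ~ Uset v := boundary_open_notin (Uset_open R n) hv.
case: (boolP [exists i, v ord0 i <= 0]) => [/existsP[i0 vi0] | /existsPn vpos].
  have [m vm mmax] := @arg_maxnP _ i0 (fun i => v ord0 i <= 0) val vi0.
  exists m; apply: cvgNy_normr; apply: (fcomp_cvgNy hb hc hu huv vm) => j mj.
  by rewrite ltNge; apply/negP => /mmax /=; rewrite leqNgt mj.
have vgt0 i : 0 < v ord0 i by rewrite ltNge vpos.
pose P (p : 'I_n) :=
  (1 <= v ord0 p) || [exists q : 'I_n, (p < q)%N && (v ord0 q <= v ord0 p)].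
have [p0 Pp0] : exists p, P p.
  apply: contra_notP vU => noP; split => [i | i j ij].
    rewrite vgt0 ltNge; apply/negP => vi1; apply: noP.
    by exists i; rewrite /P vi1.
  rewrite ltNge; apply/negP => vji; apply: noP; exists i.
  by apply/orP; right; apply/existsP; exists j; rewrite ij vji.
have [p Pp pmin] := @arg_minnP _ p0 P val Pp0.
exists p; apply: cvgy_normr; apply: (fcomp_cvgy ha hc hu huv (vgt0 p)).
  move=> j jp; rewrite ltNge; apply/negP => vpj.
  have /pmin : P j by apply/orP; right; apply/existsP; exists p; rewrite jp vpj.
  by rewrite leqNgt jp.
case/orP: Pp => [-> | /existsP[q /andP[pq vqp]]]; [by left | by right; exists q].
Qed.
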